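(* Let $n_1,n_2,n_3$ be integers and $\ell$ a positive integer with $n_1^2+n_2^2+n_3^2=\ell^2$. If $P=(x,y,z)\in\mathbb{Z}^3$ satisfies $n_1x+n_2y+n_3z=0$, then $x^2+y^2+z^2$ is a sum of two squares of integers. *)

From Stdlib Require Import ZArith.

From Stdlib Require Import ZArith Lia.
Open Scope Z_scope.

(* Rotating the normal vector (n1, n2, n3) to the pole (0, 0, l) by a rational
   map shows that (l - n3)^2 (x^2 + y^2 + z^2) is an explicit sum of two
   squares whenever (x, y, z) is orthogonal to it; since l - n3 and l + n3 add
   up to 2 l > 0, one of the poles (0, 0, l), (0, 0, -l) gives a nonzero factor.
   The square factor is removed by the Davenport-Cassels descent: if
   a^2 + b^2 = N d^2, round a/d and b/d to the nearest integers q1, q2; the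
   remainders satisfy r1^2 + r2^2 = d d' with 0 <= d' < d, and the line through
   (a/d, b/d) and (q1, q2) meets the circle of radius sqrt N again at a point
   with denominator d'. *)

Definition sum_two_sq (N : Z) : Prop := exists u v : Z, N = u ^ 2 + v ^ 2.

Lemma nearest_quotient (a d : Z) :
  0 < d -> exists q r, a = d * q + r /\ 4 * r ^ 2 <= d ^ 2.
Proof.
  intros Hd.
  exists ((2 * a + d) / (2 * d)), (a - d * ((2 * a + d) / (2 * d))).
  pose proof (Z.div_mod (2 * a + d) (2 * d) ltac:(lia)).
  pose proof (Z.mod_pos_bound (2 * a + d) (2 * d) ltac:(lia)).
  split; [ring|].
  set (r := a - d * ((2 * a + d) / (2 * d))).
  assert (Hr : 0 <= (d - 2 * r) * (d + 2 * r))
    by (apply Z.mul_nonneg_nonneg; lia).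
  clearbody r. nia.
Qed.

Lemma sum_two_sq_descent_step (N a b d : Z) :
  0 < d -> a ^ 2 + b ^ 2 = N * d ^ 2 ->
  sum_two_sq N \/
  exists d' a' b', 0 < d' < d /\ a' ^ 2 + b' ^ 2 = N * d' ^ 2.
Proof.
  intros Hd H.
  destruct (nearest_quotient a d Hd) as (q1 & r1 & -> & Hr1).
  destruct (nearest_quotient b d Hd) as (q2 & r2 & -> & Hr2).
  set (d' := d * N - 2 * (q1 * r1 + q2 * r2) - d * (q1 ^ 2 + q2 ^ 2)).
  set (K := q1 ^ 2 + q2 ^ 2 - N).
  assert (Hrem : d * d' = r1 ^ 2 + r2 ^ 2).
  { transitivity (N * d ^ 2 - ((d * q1 + r1) ^ 2 + (d * q2 + r2) ^ 2)
                  + r1 ^ 2 + r2 ^ 2); [unfold d'; ring | rewrite <- H; ring]. }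
  assert (Hcross : 2 * (q1 * r1 + q2 * r2) = - K * d - d').
  { unfold d', K. ring. }
  assert (HN : N = q1 ^ 2 + q2 ^ 2 - K) by (unfold K; ring).
  clearbody d' K.
  assert (Hd'_lt : d' < d).
  { apply (Z.mul_lt_mono_pos_l d); [exact Hd|]. rewrite Hrem.
    assert (0 < d ^ 2) by (apply Z.pow_pos_nonneg; lia).
    replace (d * d) with (d ^ 2) by ring. lia. }
  assert (Hd'_ge : 0 <= d').
  { apply (Z.mul_nonneg_cancel_l d); [exact Hd|]. rewrite Hrem, !Z.pow_2_r.
    apply Z.add_nonneg_nonneg; apply Z.square_nonneg. }
  destruct (Z.eq_dec d' 0) as [Hd'0 | Hd'0].
  - left. exists q1, q2.
    assert (Hr : r1 ^ 2 + r2 ^ 2 = 0) by (rewrite <- Hrem, Hd'0; ring).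
    assert (r1 = 0) by (clear -Hr; nia). assert (r2 = 0) by (clear -Hr; nia).
    subst r1 r2.
    apply (Z.mul_reg_r _ _ (d ^ 2)); [apply Z.pow_nonzero; lia|]. rewrite <- H. ring.
  - right. exists d', (d' * q1 + K * r1), (d' * q2 + K * r2).
    split; [lia|].
    rewrite HN.
    transitivity (d' ^ 2 * (q1 ^ 2 + q2 ^ 2) + d' * K * (2 * (q1 * r1 + q2 * r2))
                  + K ^ 2 * (r1 ^ 2 + r2 ^ 2)); [ring|].
    rewrite Hcross, <- Hrem. ring.
Qed.

Lemma sum_two_sq_of_scaled (N a b d : Z) :
  0 < d -> a ^ 2 + b ^ 2 = N * d ^ 2 -> sum_two_sq N.
Proof.
  revert a b.
  induction d as [d IH] using (well_founded_ind (Z.lt_wf 0)).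
  intros a b Hd H.
  destruct (sum_two_sq_descent_step N a b d Hd H)
    as [HN | (d' & a' & b' & Hd' & H')]; [exact HN|].
  exact (IH d' ltac:(lia) a' b' ltac:(lia) H').
Qed.

Lemma orthogonal_scaled_sum_two_sq (n1 n2 n3 l x y z : Z) :
  n1 ^ 2 + n2 ^ 2 + n3 ^ 2 = l ^ 2 ->
  n1 * x + n2 * y + n3 * z = 0 ->
  ((l - n3) * x + n1 * z) ^ 2 + ((l - n3) * y + n2 * z) ^ 2
  = (x ^ 2 + y ^ 2 + z ^ 2) * (l - n3) ^ 2.
Proof.
  intros Hn Hp.
  transitivity ((x ^ 2 + y ^ 2 + z ^ 2) * (l - n3) ^ 2
                + 2 * (l - n3) * z * (n1 * x + n2 * y + n3 * z)
                + z ^ 2 * (n1 ^ 2 + n2 ^ 2 + n3 ^ 2 - l ^ 2)); [ring|].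
  rewrite Hn, Hp. ring.
Qed.

Theorem corollary2p6 (n1 n2 n3 l x y z : Z) :
  0 < l ->
  n1 ^ 2 + n2 ^ 2 + n3 ^ 2 = l ^ 2 ->
  n1 * x + n2 * y + n3 * z = 0 ->
  exists a b : Z, x ^ 2 + y ^ 2 + z ^ 2 = a ^ 2 + b ^ 2.
Proof.
  intros Hl Hn Hp.
  destruct (Z_lt_le_dec 0 (l - n3)) as [Hpos | Hle].
  - exact (sum_two_sq_of_scaled _ _ _ _ Hpos
             (orthogonal_scaled_sum_two_sq n1 n2 n3 l x y z Hn Hp)).
  - assert (Hneg : 0 < l - - n3) by lia.
    assert (Hn' : n1 ^ 2 + n2 ^ 2 + (- n3) ^ 2 = l ^ 2) by (rewrite <- Hn; ring).
    assert (Hp' : n1 * x + n2 * y + - n3 * - z = 0) by (rewrite <- Hp; ring).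
    replace (z ^ 2) with ((- z) ^ 2) by ring.
    exact (sum_two_sq_of_scaled _ _ _ _ Hneg
             (orthogonal_scaled_sum_two_sq n1 n2 (- n3) l x y (- z) Hn' Hp')).
Qed.
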